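(* Let $c\ge0$, $d>0$, $\beta\ge0$, $\alpha\in\mathbb{R}$ and $p_{(\alpha,\beta)}(\omega):=(\alpha-\omega^2)(c-id\omega-\omega^2)-\beta\omega^2$. Then: (i) If $\alpha<0$, then $p_{(\alpha,\beta)}$ has at least two roots of the form $i\mu$, $\mu\in\mathbb{R}$, where $\mu>0$ for exactly one root and $\mu\le0$ ($\mu<0$ if $c>0$) for at least one root. (ii) If $\alpha>0$, then all roots of $p_{(\alpha,\beta)}$ of the form $i\mu$, $\mu\in\mathbb{R}$, satisfy $\mu\le0$ ($\mu<0$ if $c>0$). If $d<2\sqrt{c}$ there is no purely imaginary root, and if $d\ge2\sqrt{\beta+c}$ there are at least two purely imaginary roots. *)

From mathcomp Require Import all_boot all_order all_algebra.
From mathcomp Require Import complex.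
Set Implicit Arguments. Unset Strict Implicit. Unset Printing Implicit Defensive.
Import Order.TTheory GRing.Theory Num.Theory.
Local Open Scope ring_scope.
Local Open Scope complex_scope.

Definition imagC (R : rcfType) (mu : R) : R[i] := Complex 0 mu.

Definition p_ab (R : rcfType) (c d alpha beta : R) : {poly R[i]} :=
  (alpha%:C%:P - 'X^2) * (c%:C%:P - (imagC d)%:P * 'X - 'X^2)
  - beta%:C%:P * 'X^2.

(* "p has at least two roots of the form i*mu (mu real), counted with
   multiplicity": there is a duplicate-free list of reals mu such that each
   i*mu is a root and the multiplicities of the i*mu add up to >= 2. *)
Definition at_least_two_imag_roots (R : rcfType) (p : {poly R[i]}) : Prop :=
  exists s : seq R, [/\ uniq s,
    all (fun mu => root p (imagC mu)) s &
    (2 <= \sum_(mu <- s) mup (imagC mu) p)%N].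

From mathcomp Require Import all_boot all_order all_algebra.
From mathcomp Require Import complex polyrcf.
From mathcomp Require Import ring lra.
Import Order.TTheory GRing.Theory Num.Theory.
Local Open Scope ring_scope.
Local Open Scope complex_scope.
Set Implicit Arguments. Unset Strict Implicit.

(* On the imaginary axis p_(alpha,beta)(i mu) is the real number
   q(mu) = (alpha + mu^2)(c + d mu + mu^2) + beta mu^2, so everything reduces
   to the real roots of the real quartic q, located by the intermediate value
   theorem: q(0) = alpha c, and q is nonnegative far out on both sides.  For
   alpha > 0 every term of q is positive at mu > 0, and for d < 2 sqrt c at
   every mu.  For d >= 2 sqrt (beta + c) the value q(-d/2) is <= -alpha beta,
   which gives two sign changes, or a double root -d/2 in the equality case. *)

Section RealClosedField.
Variable R : rcfType.

Lemma poly_ivt_oc (p : {poly R}) (a b : R) :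
  a <= b -> p.[a] * p.[b] <= 0 -> ~~ root p a -> exists2 x, a < x <= b & root p x.
Proof.
move=> ab pab pa; have [x /[!in_itv]/= /andP[ax xb] px] := polyrcf.poly_ivt ab pab.
exists x => //; rewrite xb andbT lt_neqAle ax andbT.
by apply: contraNneq pa => ->.
Qed.

Lemma poly_ivt_co (p : {poly R}) (a b : R) :
  a <= b -> p.[a] * p.[b] <= 0 -> ~~ root p b -> exists2 x, a <= x < b & root p x.
Proof.
move=> ab pab pb; have [x /[!in_itv]/= /andP[ax xb] px] := polyrcf.poly_ivt ab pab.
exists x => //; rewrite ax /= lt_neqAle xb andbT.
by apply: contraNneq pb => <-.
Qed.

Lemma sqrtr_le_half (x d : R) : 0 <= x -> 2 * Num.sqrt x <= d -> x <= (d / 2) ^+ 2.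
Proof.
move=> x_ge0 le_d; have dE : d = 2 * (d / 2) by rewrite mulrC divfK ?pnatr_eq0.
rewrite -(sqr_sqrtr x_ge0); move: le_d; rewrite {1}dE.
by have := sqrtr_ge0 x; set s := Num.sqrt x; set h := d / 2; nra.
Qed.

End RealClosedField.

Section ImaginaryRoots.
Variables (R : rcfType) (c d alpha beta : R).

Local Notation p := (p_ab c d alpha beta).

Definition q_ab : {poly R} :=
  ('X^2 + alpha%:P) * ('X^2 + d%:P * 'X + c%:P) + beta%:P * 'X^2.

Local Notation q := q_ab.

Lemma horner_q_ab (mu : R) :
  q.[mu] = (alpha + mu ^+ 2) * (c + d * mu + mu ^+ 2) + beta * mu ^+ 2.
Proof. by rewrite /q_ab !hornerE; ring. Qed.

Lemma horner_q_ab0 : q.[0] = alpha * c.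
Proof. by rewrite horner_q_ab; ring. Qed.

Lemma horner_p_ab_imagC (mu : R) : p.[imagC mu] = (q.[mu])%:C.
Proof.
rewrite horner_q_ab /p_ab !hornerE /imagC /=.
by apply/eqP; rewrite eq_complex /=; apply/andP; split; apply/eqP; ring.
Qed.

Lemma root_p_ab_imagC (mu : R) : root p (imagC mu) = root q mu.
Proof. by rewrite /root horner_p_ab_imagC; apply/eqP/eqP => [[]|->]. Qed.

Lemma q_ab_gt0_large
    (c_ge0 : 0 <= c) (d_gt0 : 0 < d) (beta_ge0 : 0 <= beta) (t : R) :
  1 + `|alpha| <= t -> 0 < q.[t].
Proof.
move=> ht; have Nalpha : - alpha <= `|alpha| by rewrite -normrN ler_norm.
have alpha_norm_ge0 := normr_ge0 alpha.
have h1 : 0 < alpha + t ^+ 2 by nra.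
have h2 : 0 < c + d * t + t ^+ 2 by nra.
have := mulr_gt0 h1 h2; have := mulr_ge0 beta_ge0 (sqr_ge0 t).
by rewrite horner_q_ab; lra.
Qed.

Lemma q_ab_ge0_neg_large
    (c_ge0 : 0 <= c) (d_gt0 : 0 < d) (beta_ge0 : 0 <= beta) (t : R) :
  1 + `|alpha| + d <= t -> 0 <= q.[- t].
Proof.
move=> ht; have Nalpha : - alpha <= `|alpha| by rewrite -normrN ler_norm.
have alpha_norm_ge0 := normr_ge0 alpha.
have h1 : 0 <= alpha + t ^+ 2 by nra.
have h2 : 0 <= c - d * t + t ^+ 2 by nra.
have := mulr_ge0 h1 h2; have := mulr_ge0 beta_ge0 (sqr_ge0 t).
by rewrite horner_q_ab sqrrN; lra.
Qed.

Lemma p_ab_neq0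
    (c_ge0 : 0 <= c) (d_gt0 : 0 < d) (beta_ge0 : 0 <= beta) : p != 0.
Proof.
apply/eqP => p0; have := q_ab_gt0_large c_ge0 d_gt0 beta_ge0 (lexx (1 + `|alpha|)).
have := horner_p_ab_imagC (1 + `|alpha|); rewrite p0 horner0 => -[<-].
by rewrite ltxx.
Qed.

Lemma two_imag_roots_of_distinct
    (c_ge0 : 0 <= c) (d_gt0 : 0 < d) (beta_ge0 : 0 <= beta) (mu nu : R) :
  mu != nu -> root q mu -> root q nu -> at_least_two_imag_roots p.
Proof.
move=> mu_nu qmu qnu; have p_neq0 := p_ab_neq0 c_ge0 d_gt0 beta_ge0.
exists [:: mu; nu]; split.
- by rewrite /= inE mu_nu.
- by rewrite /= !root_p_ab_imagC qmu qnu.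
rewrite big_cons big_seq1 -[2%N]/(1 + 1)%N.
by apply: leq_add; rewrite -XsubC_dvd // dvdp_XsubCl root_p_ab_imagC.
Qed.

Lemma two_imag_roots_of_double
    (c_ge0 : 0 <= c) (d_gt0 : 0 < d) (beta_ge0 : 0 <= beta) (mu : R) :
  ('X - (imagC mu)%:P) ^+ 2 %| p -> at_least_two_imag_roots p.
Proof.
move=> dvd2; have p_neq0 := p_ab_neq0 c_ge0 d_gt0 beta_ge0.
have mup2 : (2 <= mup (imagC mu) p)%N by rewrite mup_geq.
exists [:: mu]; split => //; last by rewrite big_seq1.
by rewrite /= andbT -dvdp_XsubCl XsubC_dvd // (leq_trans _ mup2).
Qed.

(* At a positive root, (alpha + mu^2) * ((c + d mu + mu^2) / mu^2) = - beta,
   where the first factor is <= 0 and increasing and the second positive and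
   decreasing in mu; so the left side is strictly increasing there. *)
Lemma q_ab_pos_root_uniq
    (c_ge0 : 0 <= c) (d_gt0 : 0 < d) (beta_ge0 : 0 <= beta) (x y : R) :
  0 < x -> 0 < y -> root q x -> root q y -> x = y.
Proof.
wlog lt_xy : x y / x < y => [hwlog x_gt0 y_gt0 qx qy|x_gt0 _].
  by case: (ltgtP x y) => [xy|yx|//]; [|symmetry]; apply: hwlog.
rewrite /root !horner_q_ab => /eqP qx /eqP qy.
set u := alpha + x ^+ 2 in qx *; set v := alpha + y ^+ 2 in qy *.
set Dx := c + d * x + x ^+ 2 in qx *; set Dy := c + d * y + y ^+ 2 in qy *.
have Dx_gt0 : 0 < Dx by rewrite /Dx; nra.
have Dy_gt0 : 0 < Dy by rewrite /Dy; nra.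
have lt_uv : u < v by rewrite /u /v; nra.
have v_le0 : v <= 0.
  rewrite leNgt; apply/negP => v_gt0.
  have := mulr_gt0 v_gt0 Dy_gt0; have := mulr_ge0 beta_ge0 (sqr_ge0 y); lra.
have lt_D : Dy * x ^+ 2 < Dx * y ^+ 2.
  have -> : Dy * x ^+ 2 = Dx * y ^+ 2 - (y - x) * (c * (y + x) + d * x * y).
    by rewrite /Dx /Dy; ring.
  rewrite ltrBlDr ltrDl; apply: mulr_gt0; first lra.
  have := mulr_gt0 (mulr_gt0 d_gt0 x_gt0) (lt_trans x_gt0 lt_xy).
  have := mulr_ge0 c_ge0 (ltW (addr_gt0 (lt_trans x_gt0 lt_xy) x_gt0)); lra.
have Dx2_gt0 : 0 < Dy * x ^+ 2 by rewrite mulr_gt0 ?exprn_gt0.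
have e : u * (Dx * y ^+ 2) = v * (Dy * x ^+ 2).
  have ux : u * Dx = - (beta * x ^+ 2) by lra.
  have vy : v * Dy = - (beta * y ^+ 2) by lra.
  by rewrite !mulrA ux vy; ring.
have : u * (Dx * y ^+ 2) < v * (Dx * y ^+ 2) by rewrite ltr_pM2r //; lra.
have : v * (Dx * y ^+ 2) <= v * (Dy * x ^+ 2) by rewrite ler_wnM2l //; lra.
lra.
Qed.

Lemma q_ab_pos_root_exists
    (c_ge0 : 0 <= c) (d_gt0 : 0 < d) (beta_ge0 : 0 <= beta) :
  alpha < 0 -> exists2 mu, 0 < mu & root q mu.
Proof.
move=> alpha_lt0; set t := 1 + `|alpha|.
have t_gt0 : 0 < t by rewrite /t; have := normr_ge0 alpha; lra.
have qt_gt0 := q_ab_gt0_large c_ge0 d_gt0 beta_ge0 (lexx t).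
have [c0|c_neq0] := eqVneq c 0; last first.
  have c_gt0 : 0 < c by rewrite lt_def c_neq0.
  have q0t_lt0 : q.[0] * q.[t] < 0 by rewrite horner_q_ab0 !pmulr_llt0.
  have [x /[!in_itv]/= /andP[x_gt0 _] qx] := poly_ivtoo (ltW t_gt0) q0t_lt0.
  by exists x.
(* When c = 0 the root 0 of q has to be divided out first. *)
set r : {poly R} := ('X^2 + alpha%:P) * ('X + d%:P) + beta%:P * 'X.
have qE : q = 'X * r by rewrite /q_ab /r c0 polyC0; ring.
have rt_gt0 : 0 < r.[t] by move: qt_gt0; rewrite qE hornerM hornerX pmulr_rgt0.
have r0t_lt0 : r.[0] * r.[t] < 0.
  by rewrite (_ : r.[0] = alpha * d) ?pmulr_llt0 // /r !hornerE; ring.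
have [x /[!in_itv]/= /andP[x_gt0 _] rx] := poly_ivtoo (ltW t_gt0) r0t_lt0.
by exists x; rewrite // qE rootM rx orbT.
Qed.

Lemma q_ab_npos_root_exists
    (c_ge0 : 0 <= c) (d_gt0 : 0 < d) (beta_ge0 : 0 <= beta) :
  alpha < 0 -> exists mu, [/\ mu <= 0, (0 < c -> mu < 0) & root q mu].
Proof.
move=> alpha_lt0; have [c0|c_neq0] := eqVneq c 0.
  by exists 0; rewrite c0 ltxx /root horner_q_ab0 c0 mulr0.
set t := 1 + `|alpha| + d.
have t_ge0 : - t <= 0 by rewrite /t; have := normr_ge0 alpha; lra.
have q0_lt0 : q.[0] < 0 by rewrite horner_q_ab0 pmulr_llt0 // lt_def c_neq0.
have q0_neq0 : ~~ root q 0 by rewrite /root lt_eqF.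
have qt_ge0 := q_ab_ge0_neg_large c_ge0 d_gt0 beta_ge0 (lexx t).
have qt0_le0 := mulr_ge0_le0 qt_ge0 (ltW q0_lt0).
have [x /andP[_ x_lt0] qx] := poly_ivt_co t_ge0 qt0_le0 q0_neq0.
by exists x; split; rewrite ?ltW.
Qed.

Lemma q_ab_gt0_pos
    (c_ge0 : 0 <= c) (d_gt0 : 0 < d) (beta_ge0 : 0 <= beta) (mu : R) :
  0 <= alpha -> 0 < mu -> 0 < q.[mu].
Proof.
move=> alpha_ge0 mu_gt0.
have h1 : 0 < alpha + mu ^+ 2 by nra.
have h2 : 0 < c + d * mu + mu ^+ 2 by nra.
have := mulr_gt0 h1 h2; have := mulr_ge0 beta_ge0 (sqr_ge0 mu).
by rewrite horner_q_ab; lra.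
Qed.

Lemma q_ab_root_neg
    (c_ge0 : 0 <= c) (d_gt0 : 0 < d) (beta_ge0 : 0 <= beta) (mu : R) :
  0 < alpha -> root q mu -> mu <= 0 /\ (0 < c -> mu < 0).
Proof.
move=> alpha_gt0 qmu; have mu_le0 : mu <= 0.
  rewrite leNgt; apply: contraTN qmu => mu_gt0.
  by rewrite /root gt_eqF // q_ab_gt0_pos // ltW.
split=> // c_gt0; rewrite lt_neqAle mu_le0 andbT.
by apply: contraTneq qmu => ->; rewrite /root horner_q_ab0 gt_eqF ?mulr_gt0.
Qed.

Lemma q_ab_gt0_underdamped
    (c_ge0 : 0 <= c) (d_gt0 : 0 < d) (beta_ge0 : 0 <= beta) (mu : R) :
  0 < alpha -> d < 2 * Num.sqrt c -> 0 < q.[mu].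
Proof.
move=> alpha_gt0 d_lt.
have d2_lt : d ^+ 2 < 4 * c.
  by rewrite -(sqr_sqrtr c_ge0); have := sqrtr_ge0 c; nra.
have h1 : 0 < alpha + mu ^+ 2 by nra.
have h2 : 0 < c + d * mu + mu ^+ 2 by have := sqr_ge0 (2 * mu + d); nra.
have := mulr_gt0 h1 h2; have := mulr_ge0 beta_ge0 (sqr_ge0 mu).
by rewrite horner_q_ab; lra.
Qed.

Lemma q_ab_at_half_damping :
  q.[- (d / 2)] = (alpha + (d / 2) ^+ 2) * (c - (d / 2) ^+ 2) + beta * (d / 2) ^+ 2.
Proof. by rewrite horner_q_ab; field. Qed.

Lemma q_ab_double_root_half_damping
    (c_ge0 : 0 <= c) (d_gt0 : 0 < d) (beta_ge0 : 0 <= beta) :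
  0 < alpha -> 2 * Num.sqrt (beta + c) <= d -> root q (- (d / 2)) ->
  beta = 0 /\ c = (d / 2) ^+ 2.
Proof.
move=> alpha_gt0 d_ge; rewrite /root q_ab_at_half_damping => /eqP q_h.
have := sqrtr_le_half (addr_ge0 beta_ge0 c_ge0) d_ge.
set h := d / 2 in q_h * => h2.
have beta0 : beta = 0 by nra.
split=> //; move: q_h; rewrite beta0 mul0r addr0 => /eqP.
by rewrite mulf_eq0 subr_eq0 => /predU1P[|/eqP //]; nra.
Qed.

Lemma q_ab_le_half_damping
    (c_ge0 : 0 <= c) (d_gt0 : 0 < d) (beta_ge0 : 0 <= beta) :
  0 < alpha -> 2 * Num.sqrt (beta + c) <= d -> q.[- (d / 2)] <= 0.
Proof.
move=> alpha_gt0 d_ge; rewrite q_ab_at_half_damping.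
have := sqrtr_le_half (addr_ge0 beta_ge0 c_ge0) d_ge; set h := d / 2 => h2.
by have := sqr_ge0 h; have := mulr_ge0 (ltW alpha_gt0) beta_ge0; nra.
Qed.

Lemma two_imag_roots_overdamped
    (c_ge0 : 0 <= c) (d_gt0 : 0 < d) (beta_ge0 : 0 <= beta) :
  0 < alpha -> 2 * Num.sqrt (beta + c) <= d -> at_least_two_imag_roots p.
Proof.
move=> alpha_gt0 d_ge; set h := d / 2.
have h_gt0 : 0 < h by rewrite divr_gt0.
have qh_le0 := q_ab_le_half_damping c_ge0 d_gt0 beta_ge0 alpha_gt0 d_ge.
have [qh|nqh] := boolP (root q (- h)).
  have [beta0 ch] :=
    q_ab_double_root_half_damping c_ge0 d_gt0 beta_ge0 alpha_gt0 d_ge qh.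
  apply: (two_imag_roots_of_double c_ge0 d_gt0 beta_ge0 (mu := - h)).
  set x := imagC (- h).
  have eC : c%:C = - (x * x).
    apply/eqP; rewrite ch eq_complex /= /x /imagC /h /=.
    by apply/andP; split; apply/eqP; field.
  have edC : imagC d = - (x + x).
    apply/eqP; rewrite eq_complex /= /x /imagC /h /=.
    by apply/andP; split; apply/eqP; field.
  have -> : p = ('X^2 - alpha%:C%:P) * ('X - x%:P) ^+ 2.
    by rewrite /p_ab eC edC beta0 polyC0 !polyCN polyCM polyCD; ring.
  exact: dvdp_mull.
set t := 1 + `|alpha| + d.
have t_le : - t <= - h by rewrite /t /h; have := normr_ge0 alpha; lra.
have h_le0 : - h <= 0 by rewrite oppr_le0 ltW.
have qt_ge0 := q_ab_ge0_neg_large c_ge0 d_gt0 beta_ge0 (lexx t).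
have q0_ge0 : 0 <= q.[0] by rewrite horner_q_ab0 mulr_ge0 ?(ltW alpha_gt0).
have [x1 /andP[_ x1_lt] qx1] := poly_ivt_co t_le (mulr_ge0_le0 qt_ge0 qh_le0) nqh.
have [x2 /andP[x2_gt _] qx2] := poly_ivt_oc h_le0 (mulr_le0_ge0 qh_le0 q0_ge0) nqh.
apply: (two_imag_roots_of_distinct c_ge0 d_gt0 beta_ge0 _ qx1 qx2).
by rewrite lt_eqF // (lt_trans x1_lt).
Qed.

End ImaginaryRoots.

Theorem lemma3p1 (R : rcfType) (c d alpha beta : R) :
  0 <= c -> 0 < d -> 0 <= beta ->
  (* (i) *)
  (alpha < 0 ->
     at_least_two_imag_roots (p_ab c d alpha beta)
     /\ (exists mu : R, [/\ 0 < mu, root (p_ab c d alpha beta) (imagC mu) &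
           forall nu : R, 0 < nu -> root (p_ab c d alpha beta) (imagC nu) ->
             nu = mu])
     /\ (exists mu : R, [/\ mu <= 0, (0 < c -> mu < 0) &
           root (p_ab c d alpha beta) (imagC mu)]))
  /\
  (* (ii) *)
  (0 < alpha ->
     (forall mu : R, root (p_ab c d alpha beta) (imagC mu) ->
        mu <= 0 /\ (0 < c -> mu < 0))
     /\ (d < 2 * Num.sqrt c ->
           forall mu : R, ~~ root (p_ab c d alpha beta) (imagC mu))
     /\ (2 * Num.sqrt (beta + c) <= d ->
           at_least_two_imag_roots (p_ab c d alpha beta))).
Proof.
move=> c_ge0 d_gt0 beta_ge0; split=> [alpha_lt0|alpha_gt0].
  have [mp mp_gt0 qmp] := q_ab_pos_root_exists c_ge0 d_gt0 beta_ge0 alpha_lt0.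
  have [mn [mn_le0 mn_lt0 qmn]] := q_ab_npos_root_exists c_ge0 d_gt0 beta_ge0 alpha_lt0.
  split; first apply: (two_imag_roots_of_distinct c_ge0 d_gt0 beta_ge0 _ qmp qmn).
    by rewrite gt_eqF // (le_lt_trans mn_le0).
  split; last by exists mn; rewrite root_p_ab_imagC.
  exists mp; rewrite root_p_ab_imagC; split=> // nu nu_gt0.
  rewrite root_p_ab_imagC => qnu.
  exact: (q_ab_pos_root_uniq c_ge0 d_gt0 beta_ge0 nu_gt0 mp_gt0 qnu qmp).
split=> [mu|]; first by rewrite root_p_ab_imagC; apply: q_ab_root_neg.
split=> [d_lt mu|]; last exact: two_imag_roots_overdamped.
by rewrite root_p_ab_imagC /root gt_eqF // q_ab_gt0_underdamped.
Qed.
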